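(* Let $g:\mathbb{R}^n\to\mathbb{R}\cup\{+\infty\}$ be a proper closed convex function and let $f=f_1-f_2$, where $f_1,f_2:\mathbb{R}^n\to\mathbb{R}$ are convex differentiable functions such that $\nabla f_1$ is Lipschitz continuous with modulus $L>0$, $\nabla f_2$ is Lipschitz continuous with modulus $l\ge 0$, and $L\ge l$. Let $F=f+g$, and assume $\inf F>-\infty$ and that this infimum is attained. Let $\{x^k\}$ be generated by Algorithm 1 (described in the context), let $\bar\beta=\sup_k\beta_k$, and let $\alpha\in\big[\tfrac{L+l}{2}\bar\beta^2,\tfrac L2\big]$. Then: (i) the sequence $\{H_{k,\alpha}\}$ is convergent; (ii) $\sum_{k=0}^\infty\big(\alpha-\tfrac{L+l}{2}\beta_{k+1}^2\big)\|x^{k+1}-x^k\|^2<\infty$.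
   Context: For a proper closed convex $h$, $\mathrm{Prox}_h(v)=\arg\min_{x\in\mathbb{R}^n}\{h(x)+\tfrac12\|x-v\|^2\}$. Algorithm 1 (proximal gradient algorithm with extrapolation): choose $x^0\in\operatorname{dom} g$ and $\{\beta_k\}\subseteq[0,\sqrt{L/(L+l)}]$, set $x^{-1}=x^0$, and for $k=0,1,2,\dots$ set $y^k=x^k+\beta_k(x^k-x^{k-1})$ and $x^{k+1}=\mathrm{Prox}_{\frac1L g}\big(y^k-\tfrac1L\nabla f(y^k)\big)$. For $\alpha\ge0$, $H_{k,\alpha}:=F(x^k)+\alpha\|x^k-x^{k-1}\|^2$. *)

From HB Require Import structures.
From mathcomp Require Import all_boot all_order all_algebra.
From mathcomp Require Import all_classical all_reals all_analysis.
Set Implicit Arguments. Unset Strict Implicit. Unset Printing Implicit Defensive.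
Import Order.TTheory GRing.Theory Num.Theory.
Import numFieldNormedType.Exports.
Local Open Scope classical_set_scope.
Local Open Scope ring_scope.

Section Defs.
Variables (R : realType) (n : nat).
Notation vec := 'rV[R]_n.

Definition dotv (u v : vec) : R := \sum_(i < n) u ord0 i * v ord0 i.
Definition enorm (u : vec) : R := Num.sqrt (dotv u u).

Definition convex_fun (f : vec -> R) : Prop :=
  forall (x y : vec) (t : R), 0 <= t <= 1 ->
    f (t *: x + (1 - t) *: y) <= t * f x + (1 - t) * f y.

Definition convex_efun (g : vec -> \bar R) : Prop :=
  forall (x y : vec) (t : R), 0 <= t <= 1 ->
    (g (t *: x + (1 - t) *: y)%R <= t%:E * g x + (1 - t)%:E * g y)%E.

Definition proper_efun (g : vec -> \bar R) : Prop :=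
  (forall x, g x != -oo%E) /\ (exists x, (g x < +oo)%E).

Definition closed_efun (g : vec -> \bar R) : Prop :=
  closed [set p : vec * R | (g p.1 <= p.2%:E)%E].

Definition is_gradient (f : vec -> R) (G : vec -> vec) : Prop :=
  forall x, differentiable f x /\ forall v, 'd f x v = dotv (G x) v.

Definition lipschitz_mod (G : vec -> vec) (K : R) : Prop :=
  forall x y, enorm (G x - G y) <= K * enorm (x - y).

(* x' = Prox_{h}(v) where h = (1/L) g : x' minimizes (1/L) g(z) + 1/2 ||z - v||^2
   (the minimizer is unique for proper closed convex g) *)
Definition is_prox_scaled (L : R) (g : vec -> \bar R) (v x' : vec) : Prop :=
  forall z : vec,
    (L^-1%:E * g x' + (2^-1 * enorm (x' - v) ^+ 2)%:E
     <= L^-1%:E * g z + (2^-1 * enorm (z - v) ^+ 2)%:E)%E.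

(* Algorithm 1, with x^{-1} = x^0 encoded as x (0.-1) = x 0 *)
Definition extrap (beta : nat -> R) (x : nat -> vec) (k : nat) : vec :=
  x k + beta k *: (x k - x k.-1).

Definition algorithm1 (g : vec -> \bar R) (gradf : vec -> vec) (L l : R)
    (beta : nat -> R) (x : nat -> vec) : Prop :=
  (g (x 0%N) < +oo)%E /\
  (forall k, 0 <= beta k <= Num.sqrt (L / (L + l)))%R /\
  (forall k, is_prox_scaled L g
      (extrap beta x k - L^-1 *: gradf (extrap beta x k)) (x k.+1)).

Definition Hseq (F : vec -> \bar R) (alpha : R) (x : nat -> vec) (k : nat) : \bar R :=
  (F (x k) + (alpha * enorm (x k - x k.-1) ^+ 2)%:E)%E.

End Defs.

From HB Require Import structures.
From mathcomp Require Import all_boot all_order all_algebra.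
From mathcomp Require Import all_classical all_reals all_analysis.
From mathcomp Require Import ring lra.
Set Implicit Arguments. Unset Strict Implicit. Unset Printing Implicit Defensive.
Import Order.TTheory GRing.Theory Num.Theory.
Import numFieldNormedType.Exports.
Local Open Scope classical_set_scope.
Local Open Scope ring_scope.

(** Each iterate [x^{k+1}] is the prox point of a gradient step taken at the
    extrapolated point [y^k].  The three-point inequality of the strongly
    convex prox objective compares it with [x^k]; between [y^k] and [x^{k+1}]
    one bounds [f1] above by the descent lemma and [f2] below by convexity,
    between [y^k] and [x^k] one bounds [f1] below by convexity and [f2] above
    by the descent lemma.  Since [x^k - y^k = -beta_k (x^k - x^{k-1})], this
    gives the sufficient decrease
    [H_{k+1} + (alpha - (L+l)/2 beta_k^2) ||x^k - x^{k-1}||^2 <= H_k]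
    (using [alpha <= L/2]).  So [H] is nonincreasing and bounded below by
    [min F], hence convergent, and the decreases telescope into a bounded
    series. *)

Section InnerProduct.
Variables (R : realType) (n : nat).
Implicit Types u v w : 'rV[R]_n.

Lemma dotvC u v : dotv u v = dotv v u.
Proof. by apply: eq_bigr => i _; rewrite mulrC. Qed.

Lemma dotvDl u v w : dotv (u + v) w = dotv u w + dotv v w.
Proof. by rewrite /dotv -big_split; apply: eq_bigr => i _; rewrite !mxE mulrDl. Qed.

Lemma dotvZl (a : R) u v : dotv (a *: u) v = a * dotv u v.
Proof. by rewrite /dotv mulr_sumr; apply: eq_bigr => i _; rewrite !mxE mulrA. Qed.

Lemma dotvNl u v : dotv (- u) v = - dotv u v.
Proof. by rewrite -scaleN1r dotvZl mulN1r. Qed.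

Lemma dotvBl u v w : dotv (u - v) w = dotv u w - dotv v w.
Proof. by rewrite dotvDl dotvNl. Qed.

Lemma dotvDr u v w : dotv w (u + v) = dotv w u + dotv w v.
Proof. by rewrite dotvC dotvDl !(dotvC w). Qed.

Lemma dotvZr (a : R) u v : dotv v (a *: u) = a * dotv v u.
Proof. by rewrite dotvC dotvZl dotvC. Qed.

Lemma dotvNr u v : dotv v (- u) = - dotv v u.
Proof. by rewrite dotvC dotvNl dotvC. Qed.

Lemma dotv_ge0 u : 0 <= dotv u u.
Proof. by apply: sumr_ge0 => i _; rewrite -expr2 sqr_ge0. Qed.

Lemma sqr_enorm u : enorm u ^+ 2 = dotv u u.
Proof. by rewrite /enorm sqr_sqrtr // dotv_ge0. Qed.

Lemma enorm_ge0 u : 0 <= enorm u.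
Proof. exact: sqrtr_ge0. Qed.

Lemma enormZ (a : R) u : enorm (a *: u) = `|a| * enorm u.
Proof.
by rewrite /enorm dotvZl dotvZr mulrA -expr2 sqrtrM ?sqr_ge0 // sqrtr_sqr.
Qed.

Lemma dotv_eq0l u v : dotv u u = 0 -> dotv u v = 0.
Proof.
rewrite /dotv => /eqP; rewrite psumr_eq0 => [/allP u0|j _]; last first.
  by rewrite -expr2 sqr_ge0.
apply: big1 => i _; have /= := u0 i (mem_index_enum _).
by rewrite mulf_eq0 orbb => /eqP ->; rewrite mul0r.
Qed.

Lemma dotv_amgm (s : R) u v : 0 < s ->
  2 * dotv u v <= s * dotv u u + s^-1 * dotv v v.
Proof.
move=> s_gt0; rewrite /dotv !mulr_sumr -big_split /=; apply: ler_sum => i _.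
set a := u ord0 i; set b := v ord0 i.
have : 0 <= s^-1 * (s * a - b) ^+ 2 by rewrite mulr_ge0 ?invr_ge0 ?sqr_ge0 ?ltW.
have -> : s^-1 * (s * a - b) ^+ 2 = s * (a * a) + s^-1 * (b * b) - 2 * (a * b).
  by field; rewrite gt_eqF.
by rewrite subr_ge0.
Qed.

Lemma dotv_le_enorm u v : dotv u v <= enorm u * enorm v.
Proof.
have [u0|u0] := eqVneq (dotv u u) 0.
  by rewrite dotv_eq0l // mulr_ge0 // enorm_ge0.
have [v0|v0] := eqVneq (dotv v v) 0.
  by rewrite dotvC dotv_eq0l // mulr_ge0 // enorm_ge0.
have nu : 0 < enorm u by rewrite sqrtr_gt0 lt_def u0 dotv_ge0.
have nv : 0 < enorm v by rewrite sqrtr_gt0 lt_def v0 dotv_ge0.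
have := dotv_amgm u v (divr_gt0 nv nu); rewrite -!sqr_enorm.
have -> : enorm v / enorm u * enorm u ^+ 2 + (enorm v / enorm u)^-1 * enorm v ^+ 2
   = 2 * (enorm u * enorm v) by field; rewrite !gt_eqF.
lra.
Qed.

Lemma dotv_addZ (c : R) u w :
  dotv (u + c *: w) (u + c *: w) = dotv u u + 2 * c * dotv w u + c ^+ 2 * dotv w w.
Proof. by rewrite !dotvDl !dotvDr !dotvZl !dotvZr (dotvC u w); ring. Qed.

Lemma dotv_convex_comb (t : R) u v :
  dotv (t *: u + (1 - t) *: v) (t *: u + (1 - t) *: v)
  = t * dotv u u + (1 - t) * dotv v v - t * (1 - t) * dotv (u - v) (u - v).
Proof.
by rewrite !dotvDl !dotvDr !dotvZl !dotvZr !dotvNl !dotvNr (dotvC v u); ring.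
Qed.

End InnerProduct.

Section SmoothFunctions.
Variables (R : realType) (n : nat) (f : 'rV[R]_n -> R) (G : 'rV[R]_n -> 'rV[R]_n).
Hypothesis fG : is_gradient f G.

Lemma is_derive_along_line (y d : 'rV[R]_n) (t : R) :
  is_derive t 1 (fun s : R => f (y + s *: d)) (dotv (G (y + t *: d)) d).
Proof.
have [df dfE] := fG (y + t *: d).
have quotE : (fun h : R => h^-1 *: (((fun s : R => f (y + s *: d)) \o shift t) (h *: 1)
                                    - f (y + t *: d)))
    = (fun h : R => h^-1 *: ((f \o shift (y + t *: d)) (h *: d) - f (y + t *: d))).
  apply: funext => h /=; congr (_ *: (f _ - _)).
  by rewrite /shift /= scalerDl [h *: 1]mulr1 addrCA addrA.
apply: DeriveDef; first by rewrite /derivable quotE; exact: diff_derivable.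
by rewrite /derive quotE -dfE -deriveE.
Qed.

Lemma descent_lemma (K : R) (y z : 'rV[R]_n) : lipschitz_mod G K -> 0 <= K ->
  f z <= f y + dotv (G y) (z - y) + K / 2 * enorm (z - y) ^+ 2.
Proof.
move=> GK K_ge0; set d := z - y; rewrite sqr_enorm.
set c := dotv (G y) d; set q := dotv d d.
pose h : R -> R := (fun s => f (y + s *: d)) - c \*: (@id R)
                   - (K / 2 * q) \*: ((@id R) ^+ 2).
have h' (t : R) : is_derive t 1 h (dotv (G (y + t *: d)) d - c *: 1
    - (K / 2 * q) *: ((2%:R * (@id R) t ^+ 2.-1) *: 1)).
  by apply: is_deriveB; apply: is_deriveB; exact: is_derive_along_line.
(* [h] is nonincreasing on [0, 1] because, by Lipschitz continuity,
   [<G (y + t d) - G y, d> <= K t ||d||^2]. *)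
have h_le : h 1 <= h 0.
  apply: (@ler0_derive1_le_cc R h 0 1).
  - by move=> t _; have [] := h' t.
  - move=> t t01; rewrite derive1E (@derive_val _ _ _ _ _ _ _ (h' t)) /=.
    have t_ge0 : 0 <= t by move: t01; rewrite in_itv /= => /andP[/ltW].
    rewrite /GRing.scale /= !mulr1 expr1.
    have := dotv_le_enorm (G (y + t *: d) - G y) d; rewrite dotvBl -/c.
    have := GK (y + t *: d) y; rewrite addrAC subrr add0r enormZ ger0_norm //.
    move=> /(ler_wpM2r (enorm_ge0 d)) Lip CS.
    have := sqr_enorm d; rewrite -/q; nra.
  - apply: continuous_subspaceT => t.
    by apply/differentiable_continuous/derivable1_diffP; have [] := h' t.
  - by rewrite in_itv /= lexx ler01.
  - by rewrite in_itv /= lexx ler01.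
  - exact: ler01.
move: h_le; rewrite /h !fctE /= scale0r scale1r addr0 /d subrKC expr0n expr1n.
rewrite /GRing.scale /= !mulr1 !mulr0; lra.
Qed.

Lemma convex_gradient_ineq (y z : 'rV[R]_n) :
  convex_fun f -> f y + dotv (G y) (z - y) <= f z.
Proof.
move=> fcvx; set d := z - y; have [df dfE] := fG y.
have quot_cvg : (fun h : R => h^-1 *: ((f \o shift y) (h *: d) - f y)) @ 0^'+
    --> 'D_d f y.
  apply: (cvg_trans _ (diff_derivable (v:=d) df)); apply: cvg_fmap2.
  by apply: within_subset => u /= u0; rewrite gt_eqF.
rewrite deriveE // dfE in quot_cvg.
suff : dotv (G y) d <= f z - f y by lra.
apply: (cvgr_to_le quot_cvg); near=> h.
have h_gt0 : 0 < h by near: h; exact: nbhs_right_gt.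
have h_le1 : h <= 1 by near: h; apply: nbhs_right_le; exact: ltr01.
have := fcvx z y h; rewrite (ltW h_gt0) h_le1 => /(_ isT).
have -> : h *: z + (1 - h) *: y = h *: d + y.
  by rewrite /d scalerBr scalerBl scale1r [y - _]addrC addrA.
rewrite /= /shift /= /GRing.scale /= addrC ler_pdivrMl //; lra.
Unshelve. all: by end_near.
Qed.

End SmoothFunctions.

Lemma le0_of_le_scaled (R : realFieldType) (A N : R) : 0 <= N ->
  (forall t, 0 < t -> t <= 1 -> A <= t * N) -> A <= 0.
Proof.
move=> N_ge0 AtN; case: (lerP A 0) => // A_gt0.
have AN_gt0 : 0 < A + N by lra.
have := AtN (A / (A + N)) (divr_gt0 A_gt0 AN_gt0).
rewrite ler_pdivrMr // mul1r => /(_ ltac:(lra)).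
rewrite mulrAC ler_pdivlMr // => ?; nra.
Qed.

Section ScaledProx.
Variables (R : realType) (n : nat) (g : 'rV[R]_n -> \bar R) (L : R).
Hypotheses (L_gt0 : 0 < L) (g_proper : proper_efun g).

Lemma prox_scaled_fin (v x' z : 'rV[R]_n) : is_prox_scaled L g v x' ->
  g z \is a fin_num -> g x' \is a fin_num.
Proof.
move=> prox; have := prox z; case: (g z) => // gz + _.
case E: (g x') => [r| |] //; last by have := g_proper.1 x'; rewrite E.
by rewrite gt0_muley ?lte_fin ?invr_gt0 // addye.
Qed.

(* The prox objective is [1/L]-strongly convex, so its minimiser beats every
   other point by half the squared distance. *)
Lemma prox_scaled_ineq (v x' z : 'rV[R]_n) (gx gz : R) : convex_efun g ->
  is_prox_scaled L g v x' -> g z = gz%:E -> g x' = gx%:E ->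
  L^-1 * gx + 2^-1 * dotv (x' - v) (x' - v) + 2^-1 * dotv (z - x') (z - x')
  <= L^-1 * gz + 2^-1 * dotv (z - v) (z - v).
Proof.
move=> gcvx prox gzE gxE; set N := dotv (z - x') (z - x').
suff : L^-1 * gx + 2^-1 * dotv (x' - v) (x' - v) -
   (L^-1 * gz + 2^-1 * dotv (z - v) (z - v)) + 2^-1 * N <= 0 by lra.
apply: (@le0_of_le_scaled _ _ (2^-1 * N)).
  by rewrite mulr_ge0 ?invr_ge0 ?ler0n ?dotv_ge0.
move=> t t_gt0 t_le1; set zt := t *: z + (1 - t) *: x'.
have := gcvx z x' t; rewrite (ltW t_gt0) t_le1 gzE gxE => /(_ isT) /=.
have := prox zt; rewrite gxE.
case E: (g zt) => [r| |] //=; last by have := g_proper.1 zt; rewrite E.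
rewrite !lee_fin !sqr_enorm => prox_zt cvx_zt.
have ztvE : zt - v = t *: (z - v) + (1 - t) *: (x' - v).
  by apply/rowP => i; rewrite /zt !mxE; ring.
have zxE : (z - v) - (x' - v) = z - x' by rewrite opprB addrA subrK.
rewrite ztvE dotv_convex_comb zxE -/N in prox_zt.
set p := dotv (z - v) (z - v) in prox_zt *.
set q := dotv (x' - v) (x' - v) in prox_zt *.
have : L^-1 * r <= L^-1 * (t * gz + (1 - t) * gx) by rewrite ler_pM2l ?invr_gt0.
have := dotv_ge0 (z - x'); rewrite -/N => N_ge0 Lr_le.
rewrite -(ler_pM2l t_gt0); nra.
Qed.

End ScaledProx.

Section ProxGradientStep.
Variables (R : realType) (n : nat) (g : 'rV[R]_n -> \bar R)
  (f1 f2 : 'rV[R]_n -> R) (G1 G2 : 'rV[R]_n -> 'rV[R]_n) (L l : R).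
Hypotheses (L_gt0 : 0 < L) (l_ge0 : 0 <= l).
Hypotheses (g_proper : proper_efun g) (g_convex : convex_efun g).
Hypotheses (f1_convex : convex_fun f1) (f2_convex : convex_fun f2).
Hypotheses (f1G1 : is_gradient f1 G1) (f2G2 : is_gradient f2 G2).
Hypotheses (G1_lip : lipschitz_mod G1 L) (G2_lip : lipschitz_mod G2 l).

Lemma prox_grad_step_decrease (y xk x' : 'rV[R]_n) (gk gx : R) :
  is_prox_scaled L g (y - L^-1 *: (G1 y - G2 y)) x' ->
  g xk = gk%:E -> g x' = gx%:E ->
  f1 x' - f2 x' + gx <= f1 xk - f2 xk + gk + (L + l) / 2 * enorm (xk - y) ^+ 2
                        - L / 2 * enorm (x' - xk) ^+ 2.
Proof.
move=> prox gkE gxE; rewrite !sqr_enorm.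
set w := L^-1 *: (G1 y - G2 y) in prox.
have Lw : G1 y - G2 y = L *: w by rewrite /w scalerA mulfV ?gt_eqF // scale1r.
have := prox_scaled_ineq L_gt0 g_proper g_convex prox gkE gxE.
have shiftE (u : 'rV[R]_n) : u - (y - w) = (u - y) + 1 *: w.
  by rewrite scale1r opprB addrA addrAC.
rewrite !shiftE !dotv_addZ.
have inner (u : 'rV[R]_n) : dotv (G1 y) u - dotv (G2 y) u = L * dotv w u.
  by rewrite -dotvBl Lw dotvZl.
have inner_x' := inner (x' - y); have inner_xk := inner (xk - y).
have f1_up := descent_lemma f1G1 y x' G1_lip (ltW L_gt0).
have f2_lo := convex_gradient_ineq f2G2 y x' f2_convex.
have f1_lo := convex_gradient_ineq f1G1 y xk f1_convex.
have f2_up := descent_lemma f2G2 y xk G2_lip l_ge0.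
rewrite !sqr_enorm in f1_up f2_up.
have -> : dotv (xk - x') (xk - x') = dotv (x' - xk) (x' - xk).
  by rewrite -opprB dotvNl dotvNr opprK.
have Lgx : L * (L^-1 * gx) = gx by rewrite mulrA mulfV ?gt_eqF // mul1r.
have Lgk : L * (L^-1 * gk) = gk by rewrite mulrA mulfV ?gt_eqF // mul1r.
move=> /(ler_wpM2l (ltW L_gt0)); nra.
Qed.

End ProxGradientStep.

Lemma sqr_le_sup_range (R : realType) (u : nat -> R) (k : nat) :
  (forall k, 0 <= u k) -> has_ubound (range u) -> u k ^+ 2 <= sup (range u) ^+ 2.
Proof.
move=> u_ge0 u_ub.
have uk_le : u k <= sup (range u) by apply: ub_le_sup => //; exists k.
by rewrite lerXn2r // nnegrE // (le_trans (u_ge0 k)).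
Qed.

Lemma nneseries_telescope_lty (R : realType) (a h : nat -> R) (m : R) :
  (forall k, 0 <= a k) -> (forall k, a k <= h k - h k.+1) -> (forall k, m <= h k) ->
  (\sum_(0 <= k <oo) (a k)%:E < +oo)%E.
Proof.
move=> a_ge0 a_le h_ge; apply: (@le_lt_trans _ _ (h 0%N - m)%:E); last exact: ltry.
apply: lime_le; first by apply: is_cvg_nneseries => k _ _; rewrite lee_fin.
apply: nearW => K; rewrite sumEFin lee_fin.
have partial_le : \sum_(0 <= k < K) a k <= h 0%N - h K.
  elim: K => [|K IH]; first by rewrite big_geq // subrr.
  by rewrite big_nat_recr //=; have := a_le K; lra.
by have := h_ge K; lra.
Qed.

Section Algorithm1.
Variables (R : realType) (n : nat) (g : 'rV[R]_n -> \bar R)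
  (f1 f2 : 'rV[R]_n -> R) (G1 G2 : 'rV[R]_n -> 'rV[R]_n) (L l alpha : R)
  (beta : nat -> R) (x : nat -> 'rV[R]_n).
Hypotheses (L_gt0 : 0 < L) (l_ge0 : 0 <= l).
Hypotheses (g_proper : proper_efun g) (g_convex : convex_efun g).
Hypotheses (f1_convex : convex_fun f1) (f2_convex : convex_fun f2).
Hypotheses (f1G1 : is_gradient f1 G1) (f2G2 : is_gradient f2 G2).
Hypotheses (G1_lip : lipschitz_mod G1 L) (G2_lip : lipschitz_mod G2 l).
Hypothesis iterates : algorithm1 g (fun z => G1 z - G2 z) L l beta x.
Hypotheses (alpha_ge : forall k, (L + l) / 2 * beta k ^+ 2 <= alpha)
  (alpha_le : alpha <= L / 2).

Let F z := ((f1 z - f2 z)%:E + g z)%E.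

Lemma iterate_fin_num k : g (x k) \is a fin_num.
Proof.
have [gx0 [_ prox]] := iterates; elim: k => [|k IH].
  by rewrite fin_numE g_proper.1 (lt_eqF gx0).
exact: (prox_scaled_fin L_gt0 g_proper (prox k) IH).
Qed.

Let Hreal k := f1 (x k) - f2 (x k) + fine (g (x k)) + alpha * enorm (x k - x k.-1) ^+ 2.

Lemma HseqE : Hseq F alpha x = EFin \o Hreal.
Proof.
apply: funext => k; rewrite /Hseq /F /Hreal /=.
by rewrite -[in LHS](fineK (iterate_fin_num k)) -!EFinD.
Qed.

Lemma Hreal_decrease k :
  (alpha - (L + l) / 2 * beta k ^+ 2) * enorm (x k - x k.-1) ^+ 2
  <= Hreal k - Hreal k.+1.
Proof.
have [_ [_ prox]] := iterates.
have := prox_grad_step_decrease L_gt0 l_ge0 g_proper g_convex f1_convex f2_convex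
  f1G1 f2G2 G1_lip G2_lip (prox k) (esym (fineK (iterate_fin_num k)))
  (esym (fineK (iterate_fin_num k.+1))).
have -> : x k - extrap beta x k = - beta k *: (x k - x k.-1).
  by rewrite /extrap opprD addrA subrr add0r scaleNr.
rewrite enormZ normrN exprMn (real_normK (num_real _)) /Hreal /=.
have gap_ge0 : 0 <= L / 2 - alpha by rewrite subr_ge0.
have := mulr_ge0 gap_ge0 (sqr_ge0 (enorm (x k.+1 - x k))); lra.
Qed.

Lemma Hreal_nonincreasing k : Hreal k.+1 <= Hreal k.
Proof.
rewrite -subr_ge0; apply: le_trans (Hreal_decrease k).
by rewrite mulr_ge0 ?sqr_ge0 // subr_ge0.
Qed.

Hypothesis F_min : exists xs, forall z, (F xs <= F z)%E.

Lemma Hreal_bounded_below : exists m, forall k, m <= Hreal k.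
Proof.
have [xs xs_min] := F_min.
have Fx_fin k : F (x k) = (Hreal k - alpha * enorm (x k - x k.-1) ^+ 2)%:E.
  by rewrite /F -(fineK (iterate_fin_num k)) /Hreal; congr EFin; ring.
have alpha_ge0 : 0 <= alpha.
  apply: le_trans _ (alpha_ge 0%N).
  by rewrite mulr_ge0 ?sqr_ge0 // divr_ge0 // addr_ge0 // ltW.
have : (F xs <= F (x 0%N))%E := xs_min _.
rewrite Fx_fin; case E: (F xs) => [m| |] // _; last first.
  by move: E; rewrite /F; case: (g xs) (g_proper.1 xs).
exists m => k; have := xs_min (x k); rewrite E Fx_fin lee_fin.
have := mulr_ge0 alpha_ge0 (sqr_ge0 (enorm (x k - x k.-1))); lra.
Qed.

Lemma Hseq_cvg : exists lim : R, Hseq F alpha x @ \oo --> lim%:E.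
Proof.
have [m Hreal_ge] := Hreal_bounded_below.
exists (limn Hreal); rewrite HseqE.
apply: cvg_EFin; first exact: nearW.
apply: nonincreasing_is_cvgn; first exact/nonincreasing_seqP/Hreal_nonincreasing.
by exists m => _ [k _ <-].
Qed.

Lemma decrease_series_lty :
  (\sum_(0 <= k <oo)
      ((alpha - (L + l) / 2 * beta k.+1 ^+ 2) * enorm (x k.+1 - x k) ^+ 2)%:E
     < +oo)%E.
Proof.
have [m Hreal_ge] := Hreal_bounded_below.
apply: (@nneseries_telescope_lty _ _ (fun k => Hreal k.+1) m) => k //.
  by rewrite mulr_ge0 ?sqr_ge0 // subr_ge0.
exact: Hreal_decrease k.+1.
Qed.

End Algorithm1.

Theorem lemma3p3 (R : realType) (n : nat)
  (g : 'rV[R]_n -> \bar R) (f1 f2 : 'rV[R]_n -> R) (G1 G2 : 'rV[R]_n -> 'rV[R]_n)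
  (L l : R) (beta : nat -> R) (x : nat -> 'rV[R]_n) (alpha : R) :
  proper_efun g -> closed_efun g -> convex_efun g ->
  convex_fun f1 -> convex_fun f2 ->
  is_gradient f1 G1 -> is_gradient f2 G2 ->
  0 < L -> 0 <= l -> l <= L ->
  lipschitz_mod G1 L -> lipschitz_mod G2 l ->
  let F := fun z => ((f1 z - f2 z)%:E + g z)%E in
  (-oo < ereal_inf (range F))%E ->
  (exists xs, forall z, (F xs <= F z)%E) ->
  algorithm1 g (fun z => G1 z - G2 z) L l beta x ->
  let betabar := sup (range beta) in
  (L + l) / 2 * betabar ^+ 2 <= alpha -> alpha <= L / 2 ->
  (exists lim : R, Hseq F alpha x @ \oo --> lim%:E) /\
  (\sum_(0 <= k <oo)
      ((alpha - (L + l) / 2 * beta k.+1 ^+ 2) * enorm (x k.+1 - x k) ^+ 2)%:E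
     < +oo)%E.
Proof.
move=> g_proper _ g_convex f1_convex f2_convex f1G1 f2G2 L_gt0 l_ge0 _ G1_lip G2_lip
  F _ F_min iterates betabar betabar_le alpha_le.
have beta_bounds k := (iterates.2.1 k).
have beta_ub : has_ubound (range beta).
  by exists (Num.sqrt (L / (L + l))) => _ [k _ <-]; case/andP: (beta_bounds k).
have alpha_ge k : (L + l) / 2 * beta k ^+ 2 <= alpha.
  apply: le_trans betabar_le; apply: ler_wpM2l.
    by rewrite divr_ge0 // addr_ge0 // ltW.
  by rewrite /betabar; apply: sqr_le_sup_range => // j; case/andP: (beta_bounds j).
split.
- exact: Hseq_cvg L_gt0 l_ge0 g_proper g_convex f1_convex f2_convex f1G1 f2G2
    G1_lip G2_lip iterates alpha_ge alpha_le F_min.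
- exact: decrease_series_lty L_gt0 l_ge0 g_proper g_convex f1_convex f2_convex
    f1G1 f2G2 G1_lip G2_lip iterates alpha_ge alpha_le F_min.
Qed.
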